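(* For $n\geqslant 1$ and $k\geqslant 0$, let $\mathfrak{e}_{n,k}$ be the number of words of length $n$ over the alphabet $\{1,\dots,k\}$ avoiding both patterns $010$ and $120$ (not required to use every letter). Then $$\mathfrak{e}_{n,k}=\sum_{d=1}^{k}\binom{k}{d}\frac{1}{d}\binom{n-1}{d-1}\binom{n+d}{d-1}.$$
   Context: A word contains a pattern $p$ if some subsequence is order-isomorphic to $p$; otherwise it avoids $p$. Avoiding $010$: no $i<j<l$ with $\omega_i=\omega_l<\omega_j$. Avoiding $120$: no $i<j<l$ with $\omega_l<\omega_i<\omega_j$. *)

From mathcomp Require Import all_boot all_order all_algebra.
Set Implicit Arguments. Unset Strict Implicit. Unset Printing Implicit Defensive.

(* A word of length n over a k-letter alphabet is an n-tuple of 'I_k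
   (letters 0..k-1, order-isomorphic to {1..k}). *)

Definition contains010 (k n : nat) (w : n.-tuple 'I_k) : bool :=
  [exists i : 'I_n, exists j : 'I_n, exists l : 'I_n,
    [&& i < j, j < l, tnth w i == tnth w l & tnth w l < tnth w j]].

Definition contains120 (k n : nat) (w : n.-tuple 'I_k) : bool :=
  [exists i : 'I_n, exists j : 'I_n, exists l : 'I_n,
    [&& i < j, j < l, tnth w l < tnth w i & tnth w i < tnth w j]].

Definition avoids_010_120 (k n : nat) (w : n.-tuple 'I_k) : bool :=
  ~~ contains010 w && ~~ contains120 w.

Definition e_count (n k : nat) : nat :=
  #|[set w : n.-tuple 'I_k | avoids_010_120 w]|.

From mathcomp Require Import all_boot all_order all_algebra.
From mathcomp Require Import ring lra zify.
Import GRing.Theory Num.Theory.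

Set Implicit Arguments.
Unset Strict Implicit.
Unset Printing Implicit Defensive.

(* A word avoids both 010 and 120 iff it has no positions i < j < l with
   w_l <= w_i < w_j.  If a is the first letter of such a word, the rest
   splits as x ++ y, where x uses only letters <= a and y only letters > a,
   and x, y avoid the patterns again.  Counting gives the convolution
     e(0,k) = 1,  e(n+1,k) = sum_(a<k) sum_(m<=n) e(m,a+1) e(n-m,k-a-1).
   Over Q[t] let h_0 = t and h_(m+1) = h_m + sum_i h_i h_(m-i).  Under the
   substitution t = y/(1-y) (the linear maps [ycoef k], multiplicative for
   convolution) the coefficient of y^k in h_n is e(n,k).  The series
   H = sum_n h_n x^n satisfies x H^2 + (x-1) H + t = 0, so S = 1 - x - 2xH
   squares to D = 1 - 2(1+2t)x + x^2; hence 2 D S' = D' S, which is a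
   three-term linear recurrence for h_n.  The explicit polynomials
   (1+t) sum_d C(n-1,d-1) C(n+d,d-1)/d t^d satisfy the same recurrence (by
   binomial identities) and initial values, so they equal h_n, and applying
   [ycoef k] to them gives the stated sum, since (1+t) t^d |-> C(k,d). *)

(* Patterns and a recursive characterisation of avoiding words. *)

Definition tail_above (a : nat) (u : seq nat) : bool :=
  all (fun c => a < c) (drop (find (fun c => a < c) u) u).

Fixpoint avoider (s : seq nat) : bool :=
  if s is a :: u then tail_above a u && avoider u else true.

Definition has_pattern (s : seq nat) : Prop :=
  exists i j l, [/\ (i < j), (j < l), (l < size s) &
     nth 0 s l <= nth 0 s i < nth 0 s j].

Lemma all_drop (p : pred nat) n s : all p s -> all p (drop n s).
Proof. by rewrite -{1}(cat_take_drop n s) all_cat => /andP[]. Qed.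

Lemma tail_above_cat a x y : all (fun c => a < c) y ->
  tail_above a (x ++ y) = tail_above a x.
Proof.
move=> hy; rewrite /tail_above find_cat.
case: ifP => hx; first by rewrite drop_cat -has_find hx all_cat hy andbT.
rewrite drop_cat ltnNge leq_addr /= addKn.
have -> : find (fun c => a < c) x = size x.
  by apply/eqP; rewrite eqn_leq find_size /= leqNgt -has_find hx.
by rewrite drop_size /= all_drop.
Qed.

Lemma avoider_cat a x y : all (fun c => c <= a) x -> all (fun c => a < c) y ->
  avoider (x ++ y) = avoider x && avoider y.
Proof.
elim: x => [|c x IH] //= /andP[hc hx] hy.
rewrite tail_above_cat ?IH ?andbA //.
by apply/allP => d hd; have := allP hy d hd; lia.
Qed.

Lemma avoider_shift b v : avoider (map (addn b) v) = avoider v.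
Proof.
elim: v => [|c v IH] //=; rewrite IH; congr (_ && _).
rewrite /tail_above find_map -map_drop all_map.
rewrite (@eq_find _ _ (fun c0 => c < c0)); last by move=> d /=; rewrite ltn_add2l.
by apply: eq_all => d /=; rewrite ltn_add2l.
Qed.

Lemma all_le_before_find a u :
  all (fun c => c <= a) (take (find (fun c => a < c) u) u).
Proof. by elim: u => [|c u IH] //=; case: ifP => h //=; rewrite IH andbT; lia. Qed.

Lemma find_at_cut a u m : (m <= size u) ->
  all (fun c => c <= a) (take m u) -> all (fun c => a < c) (drop m u) ->
  find (fun c => a < c) u = m.
Proof.
move=> hm ht hd; rewrite -(cat_take_drop m u) find_cat size_take.
have -> : has (fun c => a < c) (take m u) = false.
  by apply/negbTE/hasPn => c hc; have := allP ht c hc; lia.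
have -> : (if (m < size u) then m else size u) = m by case: ifP => //; lia.
by case: (drop m u) hd => [|d y] /=; [rewrite addn0 | case/andP => ->; rewrite addn0].
Qed.

Lemma avoider_cons_cut a u m : (m <= size u) ->
  [&& all (fun c => c <= a) (take m u), avoider (take m u),
      all (fun c => a < c) (drop m u) & avoider (drop m u)]
  = (m == find (fun c => a < c) u) && avoider (a :: u).
Proof.
move=> hm; apply/idP/idP.
  case/and4P=> hlo hx hhi hy; have hf := find_at_cut hm hlo hhi.
  rewrite hf eqxx /= /tail_above hf hhi /=.
  by rewrite -(cat_take_drop m u) (avoider_cat hlo hhi) hx hy.
case/andP=> /eqP -> /= /andP[ht hu]; have hlo := all_le_before_find a u.
rewrite hlo -/(tail_above a u) ht /=; move: hu.
by rewrite -{1}(cat_take_drop (find (fun c => a < c) u) u) (avoider_cat hlo ht).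
Qed.

Lemma tail_above_nth a u : tail_above a u -> forall j l, (j < l) ->
  (l < size u) -> a < nth 0 u j -> a < nth 0 u l.
Proof.
move=> ht j l hjl hl hj; set f := find (fun c => a < c) u.
have hf : (f <= j) by rewrite leqNgt; apply/negP => /(before_find 0) /=; rewrite hj.
have := (all_nthP 0 ht) (l - f).
by rewrite size_drop nth_drop subnKC; [apply; lia | lia].
Qed.

Lemma not_tail_above_nth a u : ~~ tail_above a u -> exists j l,
  [/\ (j < l), (l < size u), a < nth 0 u j & nth 0 u l <= a].
Proof.
rewrite /tail_above; set f := find (fun c => a < c) u.
case/allPn => x /(nthP 0)[i hi hix] hxa; rewrite size_drop in hi.
have hfu : (f < size u) by rewrite -subn_gt0 (leq_ltn_trans (leq0n i) hi).
have hfa : a < nth 0 u f by apply: (nth_find 0); rewrite has_find.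
rewrite nth_drop in hix.
have hi0 : i != 0 by apply: contraNneq hxa => hi0; rewrite -hix hi0 addn0.
clearbody f; exists f, (f + i); split => //; first lia.
  by rewrite -ltn_subRL.
by rewrite hix leqNgt.
Qed.

Lemma avoiderP s : reflect (~ has_pattern s) (avoider s).
Proof.
apply: (iffP idP).
  elim: s => [_ [i [j [l []]]] //|a u IH] /= /andP[ht hu] [[|i] [j [l [hij hjl hl hv]]]].
    case: j l hij hjl hl hv => [|j] [|l] //= _ hjl hl hv.
    by have := @tail_above_nth a u ht j l; lia.
  apply: IH => //; case: j l hij hjl hl hv => [|j] [|l] // hij hjl hl hv.
  by exists i, j, l.
elim: s => [|a u IH] //= hno; apply/andP; split.
  apply/negPn/negP => /not_tail_above_nth [j [l [hjl hl hj hla]]].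
  by apply: hno; exists 0, j.+1, l.+1; split => //=; lia.
apply: IH => -[i [j [l [hij hjl hl hv]]]].
by apply: hno; exists i.+1, j.+1, l.+1.
Qed.

(* Counting words, and the convolution recurrence. *)

Fixpoint words (k n : nat) : seq (seq nat) :=
  if n is n'.+1 then flatten [seq [seq a :: u | u <- words k n'] | a <- iota 0 k]
  else [:: [::]].

Lemma count_words_S k n (P : pred (seq nat)) :
  count P (words k n.+1) =
  \sum_(a < k) count (fun u => P ((a : nat) :: u)) (words k n).
Proof.
rewrite /= count_flatten sumnE !big_map.
rewrite -(big_mkord xpredT (fun a => count (fun u => P (a :: u)) (words k n))).
by rewrite /index_iota subn0; apply: eq_bigr => a _; rewrite count_map.
Qed.

Lemma size_words k n u : u \in words k n -> size u = n.
Proof.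
elim: n u => [|n IH] u /=; first by rewrite inE => /eqP ->.
by case/flattenP => s /mapP [a _ ->] /mapP [v hv ->] /=; rewrite IH.
Qed.

Lemma count_andb (T : Type) (b : bool) (P : pred T) s :
  count (fun u => b && P u) s = b * count P s.
Proof. by case: b; rewrite ?mul1n ?mul0n ?count_pred0. Qed.

Lemma count_take_drop k m n (P Q : pred (seq nat)) : m <= n ->
  count (fun u => P (take m u) && Q (drop m u)) (words k n) =
  count P (words k m) * count Q (words k (n - m)).
Proof.
elim: m n P => [|m IH] n P hmn.
  rewrite subn0 (eq_count (a2 := fun u => P [::] && Q u)) ?count_andb /= ?addn0 //.
  by move=> u; rewrite take0 drop0.
case: n hmn => [|n] // hmn; rewrite !count_words_S big_distrl /=.
by apply: eq_bigr => a _; rewrite subSS -IH.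
Qed.

Lemma count_bounded_words k b n (P : pred (seq nat)) : b <= k ->
  count (fun u => all (fun c => c < b) u && P u) (words k n) = count P (words b n).
Proof.
move=> hb; elim: n P => [|n IH] P //; rewrite !count_words_S.
rewrite (big_ord_widen k (fun a => count (fun u => P (a :: u)) (words b n)) hb).
rewrite [RHS]big_mkcond /=; apply: eq_bigr => a _ /=.
rewrite (eq_count (a2 := fun u : seq nat =>
  (a < b) && (all (fun c => c < b) u && P ((a : nat) :: u)))).
  by rewrite count_andb IH; case: (a < b); rewrite ?mul1n ?mul0n.
by move=> u; rewrite andbA.
Qed.

Lemma count_shifted_words k b n (P : pred (seq nat)) : b <= k ->
  count (fun u => all (fun c => b <= c) u && P u) (words k n)
  = count (fun v => P (map (addn b) v)) (words (k - b) n).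
Proof.
move=> hb; elim: n P => [|n IH] P //; rewrite !count_words_S.
under eq_bigr => a _.
  rewrite (eq_count (a2 := fun u : seq nat =>
    (b <= a) && (all (fun c => b <= c) u && P ((a : nat) :: u)))).
    by rewrite count_andb IH over.
  by move=> u; rewrite /= andbA.
rewrite /= -(big_mkord xpredT (fun a => (b <= a) *
  count (fun v => P (a :: map (addn b) v)) (words (k - b) n))).
rewrite (@big_cat_nat _ _ _ b 0 k) //= big_nat_cond big1 ?add0n; last first.
  by move=> i /andP[/andP[_ hi] _]; rewrite leqNgt hi mul0n.
rewrite -{1}(add0n b) big_addn big_mkord.
by apply: eq_bigr => a _ /=; rewrite leq_addl mul1n addnC.
Qed.

Definition avoiders (n k : nat) : nat := count avoider (words k n).

Lemma sum_indicator_at (f : nat) (A : bool) n : f <= n ->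
  \sum_(m < n.+1) ((m == f :> nat) && A) = A.
Proof.
move=> hf; rewrite (bigD1 (Ordinal (n := n.+1) (m := f) hf)) //= eqxx big1 ?addn0 //.
move=> i hi; case: eqP => // hif; move/eqP: hi; case.
by apply: val_inj.
Qed.

Lemma avoiders_cons_cut n k (a : 'I_k) :
  count (fun u => avoider ((a : nat) :: u)) (words k n) =
  \sum_(m < n.+1) count (fun u =>
     (all (fun c => c <= a) (take m u) && avoider (take m u)) &&
     (all (fun c => a < c) (drop m u) && avoider (drop m u))) (words k n).
Proof.
rewrite -!sum1_count !big_mkcond /=.
under [in RHS]eq_bigr => m _ do rewrite -sum1_count big_mkcond /=.
rewrite [RHS]exchange_big /= big_seq [RHS]big_seq; apply: eq_bigr => u hu.
have hs := size_words hu.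
rewrite -[LHS]/(nat_of_bool (avoider ((a : nat) :: u))).
rewrite -(@sum_indicator_at (find (fun c => a < c) u) _ n); last by rewrite -hs find_size.
by apply: eq_bigr => m _; rewrite -andbA avoider_cons_cut // hs -ltnS.
Qed.

Lemma avoiders0 k : avoiders 0 k = 1.
Proof. by []. Qed.

(* The convolution recurrence: letters <= a are renamed into a.+1 letters,
   letters > a shifted down into k - a.+1 letters. *)
Lemma avoiders_rec n k : avoiders n.+1 k =
  \sum_(a < k) \sum_(m < n.+1) avoiders m a.+1 * avoiders (n - m) (k - a.+1).
Proof.
rewrite /avoiders count_words_S; apply: eq_bigr => a _.
have hak : a.+1 <= k by apply: ltn_ord.
rewrite avoiders_cons_cut; apply: eq_bigr => m _.
rewrite (count_take_drop k (fun x => all (fun c => c <= a) x && avoider x)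
  (fun y => all (fun c => a < c) y && avoider y)); last by rewrite -ltnS.
congr (_ * _); first by rewrite -(count_bounded_words _ avoider hak).
rewrite (count_shifted_words _ avoider hak).
by apply: eq_count => v; rewrite avoider_shift.
Qed.

Lemma sum_tuple_S (T : finType) n (F : n.+1.-tuple T -> nat) :
  \sum_(w : n.+1.-tuple T) F w = \sum_(x : T) \sum_(w : n.-tuple T) F [tuple of x :: w].
Proof.
rewrite pair_big /= (reindex (fun p : T * n.-tuple T => [tuple of p.1 :: p.2])) //=.
exists (fun w : n.+1.-tuple T => (thead w, [tuple of behead w])).
  by move=> [x w] _ /=; rewrite theadE; congr (_, _); apply: val_inj.
by move=> w _ /=; rewrite -tuple_eta.
Qed.

Lemma sum_over_tuples k n (P : pred (seq nat)) :
  \sum_(w : n.-tuple 'I_k) P (map val w) = count P (words k n).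
Proof.
elim: n P => [|n IH] P.
  rewrite (eq_bigr (fun _ => (P [::] : nat))); last by move=> w _; rewrite tuple0.
  by rewrite sum_nat_const card_tuple expn0 mul1n /= addn0.
rewrite sum_tuple_S count_words_S; apply: eq_bigr => a _.
exact: (IH (fun u => P ((a : nat) :: u))).
Qed.

Lemma contains_tupleP k n (w : n.-tuple 'I_k) :
  reflect (has_pattern (map val w)) (contains010 w || contains120 w).
Proof.
set s := map val w.
have hs : size s = n by rewrite size_map size_tuple.
have hnth (i : 'I_n) : nth 0 s i = tnth w i.
  by rewrite /s (nth_map (tnth w i)) ?size_tuple // -tnth_nth.
apply: (iffP idP).
  case/orP => /existsP [i /existsP [j /existsP [l /and4P [hij hjl heq hlt]]]];
    exists i, j, l; split; rewrite ?hs ?ltn_ord // !hnth.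
    by rewrite (eqP heq) leqnn hlt.
  by rewrite (ltnW heq) hlt.
move=> [i [j [l [hij hjl hl hv]]]]; rewrite hs in hl.
pose I := Ordinal (ltn_trans hij (ltn_trans hjl hl)).
pose J := Ordinal (ltn_trans hjl hl); pose L := Ordinal hl.
rewrite -[i]/(val I) -[j]/(val J) -[l]/(val L) !hnth in hv.
case/andP: hv; case: (ltngtP (tnth w L) (tnth w I)) => // hc _ hIJ.
  apply/orP; right; apply/existsP; exists I; apply/existsP; exists J.
  by apply/existsP; exists L; rewrite /= hij hjl hc hIJ.
have E : tnth w I == tnth w L by apply/eqP/val_inj; rewrite /= hc.
apply/orP; left; apply/existsP; exists I; apply/existsP; exists J.
by apply/existsP; exists L; rewrite /= hij hjl E hc hIJ.
Qed.

Lemma e_count_avoiders n k : e_count n k = avoiders n k.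
Proof.
rewrite /e_count /avoiders -sum_over_tuples cardsE -sum1_card big_mkcond /=.
apply: eq_bigr => w _; rewrite unfold_in /avoids_010_120 -negb_or.
by case: contains_tupleP; case: avoiderP.
Qed.

(* Binomial identities. *)

Definition gbin (n d : nat) : nat := 'C(n.-1, d.-1) * 'C(n + d, d.-1).

Lemma gbin_small n d : 1 <= n -> n < d -> gbin n d = 0.
Proof. by move=> h1 h2; rewrite /gbin bin_small ?mul0n //; lia. Qed.

(* Three contiguity relations of g, in n, in d, and diagonally; each is a
   product of two of the library relations mul_bin_down/left/diag. *)
Lemma gbin_shift_n p e :
  (p - e) * (p + 2) * gbin p.+1 e.+1 = p * (p + e + 2) * gbin p e.+1.
Proof.
have h1 := mul_bin_down p e; have h2 := mul_bin_down (p + e + 2) e.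
rewrite (_ : p + e + 2 - e = p + 2) in h2; last by lia.
rewrite /gbin /= (_ : p.+1 + e.+1 = p + e + 2); last by lia.
rewrite (_ : p + e.+1 = (p + e + 2).-1); last by lia.
have -> : (p - e) * (p + 2) * ('C(p, e) * 'C(p + e + 2, e)) =
   ((p - e) * 'C(p, e)) * ((p + 2) * 'C(p + e + 2, e)) by lia.
by rewrite -h1 -h2; lia.
Qed.

Lemma gbin_shift_d m e :
  e.+1 ^ 2 * gbin m e.+2 = (m.-1 - e) * (m + e + 2) * gbin m e.+1.
Proof.
have h1 := mul_bin_left m.-1 e; have h2 := mul_bin_diag (m + e + 2) e.
rewrite /gbin /= (_ : m + e.+2 = m + e + 2); last by lia.
rewrite (_ : m + e.+1 = (m + e + 2).-1); last by lia.
have -> : (e.+1) ^ 2 * ('C(m.-1, e.+1) * 'C(m + e + 2, e.+1)) =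
   (e.+1 * 'C(m.-1, e.+1)) * (e.+1 * 'C(m + e + 2, e.+1)) by lia.
by rewrite h1 -h2; lia.
Qed.

Lemma gbin_shift_nd p e : e.+1 ^ 2 * (p + 2) * gbin p.+1 e.+2 =
  p * (p + e + 3) * (p + e + 2) * gbin p e.+1.
Proof.
have h1 := mul_bin_diag p e; have h2 := mul_bin_diag (p + e + 3) e.
have h3 := mul_bin_down (p + e + 2) e.
rewrite (_ : (p + e + 3).-1 = p + e + 2) in h2; last by lia.
rewrite (_ : p + e + 2 - e = p + 2) in h3; last by lia.
rewrite /gbin /= (_ : p.+1 + e.+2 = p + e + 3); last by lia.
rewrite (_ : p + e.+1 = (p + e + 2).-1); last by lia.
have -> : (e.+1) ^ 2 * (p + 2) * ('C(p, e.+1) * 'C(p + e + 3, e.+1)) =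
   (e.+1 * 'C(p, e.+1)) * ((p + 2) * (e.+1 * 'C(p + e + 3, e.+1))) by lia.
rewrite -h1 -h2.
have -> : p * 'C(p.-1, e) * ((p + 2) * ((p + e + 3) * 'C(p + e + 2, e))) =
   p * 'C(p.-1, e) * (p + e + 3) * ((p + 2) * 'C(p + e + 2, e)) by lia.
by rewrite -h3; lia.
Qed.

Lemma sum_bin_upper m p : \sum_(a < m.+1) 'C(a, p) = 'C(m.+1, p.+1).
Proof.
elim: m => [|m IH]; first by rewrite big_ord1 binS bin0n /=; case: p.
by rewrite big_ord_recr /= IH [in RHS]binS.
Qed.

Lemma sum_bin_upper_conv m p q :
  \sum_(a < m.+1) 'C(a, p) * 'C(m - a, q) = 'C(m.+1, (p + q).+1).
Proof.
elim: m q => [|m IH] [|q].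
- by rewrite big_ord1 /= binS !bin0n; case: p.
- by rewrite big_ord1 /= binS !bin0n; case: p.
- by rewrite addn0 -sum_bin_upper; apply: eq_bigr => a _; rewrite bin0 muln1.
rewrite big_ord_recr /= subnn bin0n muln0 addn0.
rewrite (eq_bigr (fun a : 'I_m.+1 =>
  'C(a, p) * 'C(m - a, q.+1) + 'C(a, p) * 'C(m - a, q))) => [|a _].
  by rewrite big_split /= !IH addnS binS.
by rewrite subSn ?binS ?mulnDr // -ltnS.
Qed.

(* The coefficient of y^k in (y/(1-y))^j: [k = 0] for j = 0, else C(k-1,j-1). *)
Definition tpow_coef (k j : nat) : nat :=
  if j is j'.+1 then (if k is k'.+1 then 'C(k', j') else 0) else (k == 0).

(* (y/(1-y))^i (y/(1-y))^j = (y/(1-y))^(i+j), coefficientwise. *)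
Lemma tpow_coef_conv k i j :
  \sum_(a < k.+1) tpow_coef a i * tpow_coef (k - a) j = tpow_coef k (i + j).
Proof.
case: i => [|i].
  by rewrite big_ord_recl /= subn0 mul1n big1 ?addn0 // => a _; rewrite /= mul0n.
case: j => [|j].
  rewrite big_ord_recr /= subnn muln1 big1 ?addn0 // => a _.
  by rewrite (_ : k - a = (k - a).-1.+1) /= ?muln0 //; have := ltn_ord a; lia.
case: k => [|[|k]]; first by rewrite big_ord1.
  by rewrite big_ord_recl big_ord1 /= muln0 addnS.
rewrite big_ord_recl big_ord_recr /= subnn mul0n muln0 add0n addn0.
rewrite (eq_bigr (fun a : 'I_k.+1 => 'C(a, i) * 'C(k - a, j))) => [|a _].
  by rewrite sum_bin_upper_conv addnS.
by rewrite /bump /= !add1n subSS subSn //; have := ltn_ord a; lia.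
Qed.

Local Open Scope ring_scope.

(* The same relations in Q, valid without side conditions on the indices. *)
Lemma gbin_shift_n_rat j e : (j%:R - e%:R) * (j%:R + 3) * (gbin (j + 2) (e + 2))%:R
   = (j%:R + 1) * (j%:R + e%:R + 4) * (gbin (j + 1) (e + 2))%:R :> rat.
Proof.
case: (leqP e j) => hej; last by rewrite !gbin_small ?mulr0 //; lia.
have := gbin_shift_n (j + 1) (e + 1).
rewrite (_ : (j + 1).+1 = j + 2)%N; last by lia.
rewrite (_ : (e + 1).+1 = e + 2)%N; last by lia.
move: (gbin (j + 2) _) (gbin (j + 1) _) => a b /(congr1 (fun x : nat => x%:R : rat)).
by rewrite !natrM natrB ?natrD; [move=> H; apply: etrans (etrans _ H) _; ring | lia].
Qed.

Lemma gbin_shift_d_rat j e : (e%:R + 1) ^+ 2 * (gbin (j + 2) (e + 2))%:R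
   = (j%:R + 1 - e%:R) * (j%:R + e%:R + 4) * (gbin (j + 2) (e + 1))%:R :> rat.
Proof.
case: (leqP e (j + 1)) => hej; last by rewrite !gbin_small ?mulr0 //; lia.
have := gbin_shift_d (j + 2) e.
rewrite (_ : e.+2 = e + 2)%N; last by lia.
rewrite (_ : e.+1 = e + 1)%N; last by lia.
rewrite (_ : (j + 2).-1 = j + 1)%N; last by lia.
move: (gbin _ (e + 2)) (gbin _ (e + 1)) => a b /(congr1 (fun x : nat => x%:R : rat)).
by rewrite !natrM natrB ?natrD; [move=> H; apply: etrans (etrans _ H) _; ring | lia].
Qed.

Lemma gbin_shift_nd_rat j e : (e%:R + 1) ^+ 2 * (j%:R + 4) * (gbin (j + 3) (e + 2))%:R
   = (j%:R + 2) * (j%:R + e%:R + 5) * (j%:R + e%:R + 4) * (gbin (j + 2) (e + 1))%:R :> rat.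
Proof.
have := gbin_shift_nd (j + 2) e.
rewrite (_ : e.+2 = e + 2)%N; last by lia.
rewrite (_ : e.+1 = e + 1)%N; last by lia.
rewrite (_ : (j + 2).+1 = j + 3)%N; last by lia.
move: (gbin (j + 3) _) (gbin (j + 2) _) => a b /(congr1 (fun x : nat => x%:R : rat)).
by rewrite !natrM !natrD => H; apply: etrans (etrans _ H) _; ring.
Qed.

Definition fcoef (n d : nat) : rat := (gbin n d)%:R / d%:R.

Lemma fcoef0 n : fcoef n 0 = 0.
Proof. by rewrite /fcoef invr0 mulr0. Qed.

Lemma fcoef1 n : fcoef n.+1 1 = 1.
Proof. by rewrite /fcoef /gbin /= !bin0 divr1. Qed.

(* The coefficientwise form of the recurrence of the closed form: it is the
   combination of the three contiguity relations displayed below. *)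
Lemma fcoef_rec j e : (j%:R + 4) * fcoef (j + 3) (e + 2) =
  (2 * j%:R + 5) * (fcoef (j + 2) (e + 2) + 2 * fcoef (j + 2) (e + 1))
  - (j%:R + 1) * fcoef (j + 1) (e + 2).
Proof.
rewrite /fcoef !natrD.
have hn := gbin_shift_n_rat j e; have hd := gbin_shift_d_rat j e.
have hnd := gbin_shift_nd_rat j e.
move: (gbin (j + 3) (e + 2))%:R (gbin (j + 2) (e + 2))%:R hn hd hnd => ga gb.
move: (gbin (j + 2) (e + 1))%:R (gbin (j + 1) (e + 2))%:R => gc ge hn hd hnd.
set J : rat := j%:R in hn hd hnd *; set E : rat := e%:R in hn hd hnd *.
have hJ : 0 <= J by exact: ler0n. have hE : 0 <= E by exact: ler0n.
have JE0 : J + E + 4 != 0 by apply/eqP; lra.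
have E10 : E + 1 != 0 by apply/eqP; lra.
have E20 : E + 2 != 0 by apply/eqP; lra.
have comb : (J + 4) * (E + 1) * ga - (2 * J + 5) * (E + 1) * gb
   - 2 * (2 * J + 5) * (E + 2) * gc + (J + 1) * (E + 1) * ge = 0.
  apply: (mulfI E10); apply: (mulfI JE0); rewrite !mulr0.
  have -> : (J + E + 4) * ((E + 1) * ((J + 4) * (E + 1) * ga - (2 * J + 5) * (E + 1) * gb
   - 2 * (2 * J + 5) * (E + 2) * gc + (J + 1) * (E + 1) * ge)) =
   (J + E + 4) * ((E + 1) ^+ 2 * (J + 4) * ga - (J + 2) * (J + E + 5) * (J + E + 4) * gc)
   - (2 * J + 5) * (J + E + 4) * ((E + 1) ^+ 2 * gb - (J + 1 - E) * (J + E + 4) * gc)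
   + (E + 1) ^+ 2 * ((J + 1) * (J + E + 4) * ge - (J - E) * (J + 3) * gb)
   + (J - E) * (J + 3) * ((E + 1) ^+ 2 * gb - (J + 1 - E) * (J + E + 4) * gc) by ring.
  by rewrite hn hd hnd !subrr !mulr0 !addr0.
apply/eqP; rewrite -subr_eq0; apply/eqP.
rewrite (_ : _ - _ = ((J + 4) * (E + 1) * ga - (2 * J + 5) * (E + 1) * gb
   - 2 * (2 * J + 5) * (E + 2) * gc + (J + 1) * (E + 1) * ge) / ((E + 2) * (E + 1))).
  by rewrite comb mul0r.
by field; rewrite E20 E10.
Qed.

Definition lpoly (n : nat) : {poly rat} := \poly_(d < n.+1) fcoef n d.
Definition closed_h (n : nat) : {poly rat} := (1 + 'X) * lpoly n.
Definition zpoly : {poly rat} := 1 + 'X *+ 2.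

Lemma coef_lpoly n d : (0 < n)%N -> (lpoly n)`_d = fcoef n d.
Proof.
move=> hn; rewrite coef_poly; case: ifP => // hd.
by rewrite /fcoef gbin_small ?mul0r //; lia.
Qed.

Definition legendre_rec (P : nat -> {poly rat}) : Prop :=
  forall j, P (j + 3)%N *+ (j + 4) =
    (zpoly * P (j + 2)%N) *+ (2 * j + 5) - P (j + 1)%N *+ (j + 1).

Lemma lpoly_rec : legendre_rec lpoly.
Proof.
move=> j; apply/polyP => d.
rewrite coefB !coefMn /zpoly mulrDl mul1r mulrnAl coefD coefMn coefXM !coef_lpoly; try lia.
case: d => [|[|e]] /=.
- by rewrite !fcoef0 !mul0rn subrr.
- by rewrite fcoef0 !addn1 !addn2 !addn3 !fcoef1; ring.
- have := fcoef_rec j e.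
  rewrite (_ : e.+2 = e + 2)%N; last by lia.
  rewrite (_ : e.+1 = e + 1)%N; last by lia.
  by move=> H; apply: etrans (etrans _ H) _; ring.
Qed.

(* Multiplying by 1 + t preserves the (linear, Q[t]-homogeneous) recurrence. *)
Lemma closed_h_rec : legendre_rec closed_h.
Proof. by move=> j; rewrite /closed_h -[(_ * lpoly _) *+ _]mulrnAr lpoly_rec; ring. Qed.

Lemma lpoly1 : lpoly 1 = 'X.
Proof.
apply/polyP => d; rewrite coef_lpoly // coefX.
case: d => [|[|d]]; first by rewrite fcoef0.
  by rewrite fcoef1.
by rewrite /fcoef gbin_small ?mul0r.
Qed.

Lemma lpoly2 : lpoly 2 = 'X * zpoly.
Proof.
apply/polyP => d; rewrite coef_lpoly // coefXM /zpoly coefD coef1 coefMn coefX.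
case: d => [|[|[|d]]]; first by rewrite fcoef0.
- by rewrite fcoef1.
- by rewrite /fcoef (_ : gbin 2 2 = 4%N).
- by rewrite /fcoef gbin_small ?mul0r.
Qed.

Lemma closed_h1 : closed_h 1 = 'X + 'X * 'X.
Proof. by rewrite /closed_h lpoly1; ring. Qed.

Lemma closed_h2 : closed_h 2 = zpoly * closed_h 1.
Proof. by rewrite /closed_h lpoly1 lpoly2; ring. Qed.

(* The polynomials h_n: h_0 = t and h_(m+1) = h_m + sum_(i<=m) h_i h_(m-i).
   [hpolys n] is the list [h_0; ...; h_n], which makes the course-of-values
   recursion structural. *)
Fixpoint hpolys (n : nat) : seq {poly rat} :=
  if n is m.+1 then
    rcons (hpolys m) ((hpolys m)`_m + \sum_(i < m.+1) (hpolys m)`_i * (hpolys m)`_(m - i))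
  else [:: 'X].

Definition hpoly (n : nat) : {poly rat} := (hpolys n)`_n.

Lemma size_hpolys n : size (hpolys n) = n.+1.
Proof. by elim: n => //= n IH; rewrite size_rcons IH. Qed.

Lemma nth_hpolys n i : (i <= n)%N -> (hpolys n)`_i = hpoly i.
Proof.
elim: n i => [|n IH] i hi; first by case: i hi.
case: (ltngtP i n.+1) hi => // [hi _ | -> //].
by rewrite /= nth_rcons size_hpolys hi IH.
Qed.

Lemma hpoly0 : hpoly 0 = 'X.
Proof. by []. Qed.

Lemma hpolyS m : hpoly m.+1 = hpoly m + \sum_(i < m.+1) hpoly i * hpoly (m - i).
Proof.
rewrite {1}/hpoly /= nth_rcons size_hpolys ltnn eqxx nth_hpolys //.
congr (_ + _); apply: eq_bigr => i _; rewrite !nth_hpolys // ?leq_subr //.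
by rewrite -ltnS.
Qed.

Lemma hpoly1 : hpoly 1 = 'X + 'X * 'X.
Proof. by rewrite hpolyS big_ord1 hpoly0. Qed.

Lemma hpoly2 : hpoly 2 = zpoly * hpoly 1.
Proof. by rewrite hpolyS !big_ord_recl big_ord0 /= hpoly1 hpoly0 /zpoly; ring. Qed.

(* If S^2 = D then 2 D S' = D' S; we use the exact form valid for any S, D,
   whose right-hand side is small when S^2 - D is. *)
Lemma sqrt_ode_identity (R : comNzRingType) (S D : {poly R}) :
  D * S^`() *+ 2 - D^`() * S = S * (S * S - D)^`() - (S * S - D) * S^`() *+ 2.
Proof. by rewrite derivB derivM; ring. Qed.

Lemma quadratic_ode_expand (R : comNzRingType) (S : {poly R}) (c : R) :
  (1 - c%:P * 'X *+ 2 + 'X * 'X) * S^`() *+ 2 - (1 - c%:P * 'X *+ 2 + 'X * 'X)^`() * S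
  = (S^`() - c%:P * ('X * S^`()) *+ 2 + 'X * ('X * S^`())) *+ 2
    - ((- (c%:P * S)) *+ 2 + ('X * S) *+ 2).
Proof. by rewrite !derivE; ring. Qed.

(* Truncating H = sum_k h_k x^k at order N, in Q[t][x]: the quadratic
   relation Q = x H^2 + (x - 1) H + t holds up to order N, hence so does
   S^2 = D for S = 1 - x - 2xH, D = 1 - 2zx + x^2, and so does the
   differential equation 2 D S' = D' S. *)
Section TruncatedSeries.
Variable N : nat.

Let H : {poly {poly rat}} := \poly_(k < N) hpoly k.
Let S : {poly {poly rat}} := 1 - 'X - 'X * H *+ 2.
Let D : {poly {poly rat}} := 1 - zpoly%:P * 'X *+ 2 + 'X * 'X.
Let Q : {poly {poly rat}} := 'X * (H * H) + ('X - 1) * H + ('X : {poly rat})%:P.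

Lemma square_minus_discriminant : S * S - D = 'X * Q *+ 4.
Proof. by rewrite /S /D /Q /zpoly rmorphD rmorph1 rmorphMn; ring. Qed.

Lemma coef_H k : (k < N)%N -> H`_k = hpoly k.
Proof. by move=> hk; rewrite coef_poly hk. Qed.

(* The recurrence of h_k is exactly the vanishing of the coefficients of Q. *)
Lemma coef_Q k : (k < N)%N -> Q`_k = 0.
Proof.
move=> hk; rewrite /Q mulrBl mul1r !coefD ?coefB ?coefN !coefXM coefC.
case: k hk => [|k] hk /=; first by rewrite coef_H // hpoly0 add0r sub0r addNr.
rewrite coefM !coef_H ?hpolyS; [|lia..].
rewrite (eq_bigr (fun i : 'I_k.+1 => hpoly i * hpoly (k - i))) => [|i _].
  by rewrite addr0; ring.
by rewrite !coef_H //; have := ltn_ord i; lia.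
Qed.

Lemma coef_XQ k : (k <= N)%N -> ('X * Q *+ 4)`_k = 0.
Proof.
move=> hk; rewrite coefMn coefXM; case: k hk => [|k] hk /=; first by rewrite mul0rn.
by rewrite coef_Q ?mul0rn.
Qed.

Lemma coef_ode i : (i < N)%N -> (D * S^`() *+ 2 - D^`() * S)`_i = 0.
Proof.
move=> hi; rewrite sqrt_ode_identity square_minus_discriminant coefB coefMn !coefM.
rewrite big1 => [|k _]; last first.
  by rewrite coef_deriv coef_XQ ?mul0rn ?mulr0 //; have := ltn_ord k; lia.
rewrite big1 ?sub0r ?mul0rn ?oppr0 // => k _.
by rewrite coef_XQ ?mul0r //; have := ltn_ord k; lia.
Qed.

Lemma coef_S m : (m.+1 < N)%N -> S`_m.+2 = - (hpoly m.+1 *+ 2).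
Proof.
move=> hm; rewrite /S !coefB coef1 coefX coefMn coefXM /= coef_H; last by lia.
by rewrite !subr0 sub0r.
Qed.

End TruncatedSeries.

(* Reading the coefficient of x^(j+3) in 2 D S' = D' S. *)
Lemma hpoly_rec : legendre_rec hpoly.
Proof.
move=> j; have := @coef_ode j.+4.+1 j.+3 (ltnW (ltnSn _)).
rewrite quadratic_ode_expand !(coefB, coefD, coefN, coefMn, coefCM, coefXM) /=.
rewrite !coef_deriv !coef_S; try lia.
have j2 : (j <= j.+2)%N by lia.
have j3 : (j <= j.+3)%N by lia.
rewrite !coef1 !coefX !coef_poly /= !ltnS j2 j3.
rewrite !addn3 !addn2 !addn1 => H.
apply/eqP; rewrite -subr_eq0; apply/eqP.
apply: (@scalerI _ _ (4%:R : rat)); first by rewrite pnatr_eq0.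
by rewrite scaler0 scaler_nat -oppr0 -H; ring.
Qed.

Lemma legendre_rec_unique (P P' : nat -> {poly rat}) :
  legendre_rec P -> legendre_rec P' -> P 1 = P' 1 -> P 2 = P' 2 ->
  forall n, (0 < n)%N -> P n = P' n.
Proof.
move=> hP hP' e1 e2.
suff K m : P m.+1 = P' m.+1 /\ P m.+2 = P' m.+2 by case=> // n _; case: (K n).
elim: m => [|m [IH1 IH2]] //; split => //.
have := hP m; have := hP' m; rewrite !addn3 !addn2 !addn1 IH1 IH2 => <-; rewrite -!scaler_nat.
by apply: scalerI; rewrite pnatr_eq0 addn4.
Qed.

Lemma hpoly_closed n : (0 < n)%N -> hpoly n = closed_h n.
Proof.
have e1 : hpoly 1 = closed_h 1 by rewrite hpoly1 closed_h1.
have e2 : hpoly 2 = closed_h 2 by rewrite hpoly2 closed_h2 e1.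
exact: (legendre_rec_unique hpoly_rec closed_h_rec e1 e2).
Qed.

(* Substituting t = y/(1-y) and extracting the coefficient of y^k. *)

(* The coefficient of y^k in p(y/(1-y)). *)
Definition ycoef (k : nat) (p : {poly rat}) : rat :=
  \sum_(j < size p) p`_j * (tpow_coef k j)%:R.

Lemma ycoefE M k (p : {poly rat}) : (size p <= M)%N ->
  ycoef k p = \sum_(j < M) p`_j * (tpow_coef k j)%:R.
Proof.
move=> hM; rewrite /ycoef (big_ord_widen M (fun j => p`_j * (tpow_coef k j)%:R) hM).
rewrite big_mkcond /=; apply: eq_bigr => j _; case: ltnP => // hj.
by rewrite nth_default ?mul0r.
Qed.

Lemma ycoef0 k : ycoef k 0 = 0.
Proof. by rewrite /ycoef size_poly0 big_ord0. Qed.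

Lemma ycoefD k (p q : {poly rat}) : ycoef k (p + q) = ycoef k p + ycoef k q.
Proof.
set M := maxn (size p) (size q).
rewrite (ycoefE k (size_polyD p q)) (@ycoefE M k p) ?leq_maxl //.
rewrite (@ycoefE M k q) ?leq_maxr // -big_split /=.
by apply: eq_bigr => j _; rewrite coefD mulrDl.
Qed.

Lemma ycoefZ k c (p : {poly rat}) : ycoef k (c *: p) = c * ycoef k p.
Proof.
rewrite (ycoefE k (size_scale_leq c p)) /ycoef mulr_sumr.
by apply: eq_bigr => j _; rewrite coefZ mulrA.
Qed.

Lemma ycoef_sum k (I : Type) (r : seq I) (P : pred I) (F : I -> {poly rat}) :
  ycoef k (\sum_(i <- r | P i) F i) = \sum_(i <- r | P i) ycoef k (F i).
Proof. exact: (big_morph (ycoef k) (ycoefD k) (ycoef0 k)). Qed.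

Lemma ycoefXn k i : ycoef k 'X^i = (tpow_coef k i)%:R.
Proof.
rewrite /ycoef size_polyXn big_ord_recr /= coefXn eqxx mul1r big1 ?add0r // => j _.
by rewrite coefXn (_ : (j == i :> nat) = false) ?mul0r // ltn_eqF.
Qed.

Lemma ycoef_nat k b : ycoef k b%:R = b%:R * (k == 0)%:R.
Proof. by rewrite -(expr0 'X) -scaler_nat ycoefZ ycoefXn. Qed.

Lemma ycoef_at0 (p : {poly rat}) : ycoef 0 p = p`_0.
Proof.
rewrite (@ycoefE (size p).+1 0 p) // big_ord_recl /= mulr1 big1 ?addr0 //.
by move=> j _; rewrite mulr0.
Qed.

Lemma ycoefM k (p q : {poly rat}) :
  ycoef k (p * q) = \sum_(a < k.+1) ycoef a p * ycoef (k - a) q.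
Proof.
rewrite -[p]coefK -[q]coefK !poly_def.
set P := size p; set Q := size q.
have -> : (\sum_(i < P) p`_i *: 'X^i) * (\sum_(j < Q) q`_j *: 'X^j)
  = \sum_(i < P) \sum_(j < Q) (p`_i * q`_j) *: 'X^(i + j).
  rewrite mulr_suml; apply: eq_bigr => i _; rewrite mulr_sumr; apply: eq_bigr => j _.
  by rewrite -scalerAl -scalerAr scalerA exprD.
under [RHS]eq_bigr => a _ do rewrite !ycoef_sum mulr_suml.
rewrite ycoef_sum exchange_big /=; apply: eq_bigr => i _.
rewrite ycoef_sum; under [RHS]eq_bigr => a _ do rewrite mulr_sumr.
rewrite exchange_big /=; apply: eq_bigr => j _.
rewrite ycoefZ ycoefXn -tpow_coef_conv natr_sum mulr_sumr; apply: eq_bigr => a _.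
by rewrite !ycoefZ !ycoefXn natrM; ring.
Qed.

(* (1+t) t^d |-> C(k-1,d-1) + C(k-1,d) = C(k,d), so the closed form becomes
   a sum of binomials in k. *)
Lemma ycoef_closed_h n k : (0 < n)%N ->
  ycoef k (closed_h n) = \sum_(d < n.+1) fcoef n d * 'C(k, d)%:R.
Proof.
move=> hn; rewrite /closed_h /lpoly poly_def mulr_sumr ycoef_sum.
apply: eq_bigr => -[[|d] hd] _ /=.
  by rewrite fcoef0 -scalerAr ycoefZ !mul0r.
rewrite -scalerAr mulrDl mul1r -exprS ycoefZ ycoefD !ycoefXn; congr (_ * _).
by case: k => [|k] //=; rewrite -natrD addnC -binS.
Qed.

(* h_n + [n = 0] corresponds to all avoiding words (including the empty one). *)
Definition hplus (n : nat) : {poly rat} := hpoly n + (n == 0)%N%:R.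

(* h_n is divisible by t, as is visible on the closed form. *)
Lemma hpoly_coef0 n : (hpoly n)`_0 = 0.
Proof.
case: n => [|n]; first by rewrite hpoly0 coefX.
by rewrite hpoly_closed // /closed_h coef0M coef_lpoly // fcoef0 mulr0.
Qed.

Lemma hpolyS_conv m : hpoly m.+1 = \sum_(i < m.+1) hpoly i * hplus (m - i).
Proof.
rewrite hpolyS big_ord_recr /= subnn [in RHS]big_ord_recr /= /hplus subnn /= mulrDr mulr1.
under [in RHS]eq_bigr => i _ do rewrite subn_eq0 leqNgt ltn_ord addr0.
by ring.
Qed.

Lemma ycoef_hplus0 k : ycoef k (hplus 0) = 1.
Proof.
rewrite /hplus hpoly0 ycoefD ycoef_nat -(expr1 'X) ycoefXn.
by case: k => [|k] /=; rewrite ?bin0 ?mul1r ?addr0 ?add0r.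
Qed.

(* The recurrence of [avoiders], transported to the coefficients of hplus:
   the term a = 0 of [ycoefM] vanishes because h_i has no constant term. *)
Lemma ycoef_hplusS k n : ycoef k (hplus n.+1) =
  \sum_(a < k) \sum_(m < n.+1) ycoef a.+1 (hplus m) * ycoef (k - a.+1) (hplus (n - m)).
Proof.
have hS (a m : nat) : ycoef a.+1 (hplus m) = ycoef a.+1 (hpoly m).
  by rewrite /hplus ycoefD ycoef_nat mulr0 addr0.
rewrite /hplus addr0 hpolyS_conv ycoef_sum exchange_big /=.
apply: eq_bigr => m _; rewrite ycoefM big_ord_recl ycoef_at0 hpoly_coef0 mul0r add0r.
by apply: eq_bigr => a _; rewrite hS.
Qed.

Lemma avoiders_ycoef n k : (avoiders n k)%:R = ycoef k (hplus n).
Proof.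
elim/ltn_ind: n k => -[|n] IH k; first by rewrite avoiders0 ycoef_hplus0.
rewrite avoiders_rec ycoef_hplusS natr_sum; apply: eq_bigr => a _.
rewrite natr_sum; apply: eq_bigr => m _.
by rewrite natrM !IH //; have := ltn_ord m; lia.
Qed.

(* Only d <= min(n, k) contributes, so the two ranges of summation agree. *)
Lemma closed_sum_range n k : (1 <= n)%N ->
  \sum_(d < n.+1) fcoef n d * 'C(k, d)%:R =
  \sum_(1 <= d < k.+1)
     ('C(k, d)%:R * (d%:R)^-1 * 'C(n.-1, d.-1)%:R * 'C(n + d, d.-1)%:R : rat).
Proof.
move=> hn; set F := fun d : nat => fcoef n d * 'C(k, d)%:R.
transitivity (\sum_(d < k.+1) F d); last first.
  rewrite -(big_mkord xpredT F) big_nat_recl // /F fcoef0 mul0r add0r big_add1 /=.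
  by apply: eq_big_nat => d _; rewrite /fcoef /gbin natrM; ring.
rewrite (big_ord_widen (n + k).+1 F) ?ltnS ?leq_addr //.
rewrite [RHS](big_ord_widen (n + k).+1 F) ?ltnS ?leq_addl //.
rewrite big_mkcond [RHS]big_mkcond /=; apply: eq_bigr => d _.
case: ltnP => h1; case: ltnP => h2 //.
  by rewrite /F bin_small ?mulr0.
by rewrite /F /fcoef gbin_small ?mul0r //; lia.
Qed.

Theorem mainTheorem6 (n k : nat) (hn : (1 <= n)%N) :
  (e_count n k)%:R =
  \sum_(1 <= d < k.+1)
     ('C(k, d)%:R * (d%:R)^-1 * 'C(n.-1, d.-1)%:R * 'C(n + d, d.-1)%:R : rat).
Proof.
rewrite e_count_avoiders avoiders_ycoef /hplus.
have -> : (n == 0)%N = false by case: n hn.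
by rewrite addr0 hpoly_closed // ycoef_closed_h // closed_sum_range.
Qed.
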